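(* Let $n,d\in\mathbb{N}$, let $\mathcal{A}_n=\{0,2,4,\dots,2n-2\}$ and $\mathcal{B}_n=\{1,3,5,\dots,2n-1\}$. Let $X,Y,A,B,\Lambda$ be random variables with joint distribution $P_{XYAB\Lambda}$, where $X$ and $Y$ take values in $\{0,1,\dots,d\}$, such that $P_{X\Lambda|AB}=P_{X\Lambda|A}$, $P_{Y\Lambda|AB}=P_{Y\Lambda|B}$, and $P_{AB\Lambda}=P_A\times P_B\times P_\Lambda$, with $\mathrm{supp}(P_A)\supseteq\mathcal{A}_n$ and $\mathrm{supp}(P_B)\supseteq\mathcal{B}_n$. Then $$\int \mathrm{d}P_\Lambda(\lambda)\sum_{x=0}^{d-1}\Big|P_{X|A\Lambda}(x|0,\lambda)-\frac1d\Big|\le\frac d2\, I_{n,d}(P_{XY|AB}).$$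
   Context: For a conditional distribution $P_{XY|AB}$, define $$I_{n,d}(P_{XY|AB})=2n-\sum_{x=0}^{d-1}P_{XY|AB}(x,x\oplus1|0,2n-1)-\sum_{\substack{a\in\mathcal{A}_n,\,b\in\mathcal{B}_n\\|a-b|=1}}\sum_{x=0}^{d-1}P_{XY|AB}(x,x|a,b),$$ where $\oplus$ denotes addition modulo $d$ on $\{0,\dots,d-1\}$. *)

From HB Require Import structures.
From mathcomp Require Import all_boot all_order all_algebra.
From mathcomp Require Import all_classical all_reals all_analysis.
Set Implicit Arguments. Unset Strict Implicit. Unset Printing Implicit Defensive.
Import Order.TTheory GRing.Theory Num.Theory.
Local Open Scope ring_scope.

Definition inA (n a : nat) : bool := ~~ odd a && (a < 2 * n)%N.
Definition inB (n b : nat) : bool := odd b && (b < 2 * n)%N.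

(* The hidden variable Lambda lives in a measurable space L with law P.
   p a b l x y = P_{XY|AB Lambda}(x,y | a,b,l), outputs X,Y in {0,...,d}. *)
Definition PXY {R : realType} {dL : measure_display} {L : measurableType dL}
  (P : probability L R) (d : nat)
  (p : nat -> nat -> L -> 'I_d.+1 -> 'I_d.+1 -> R) (a b x y : nat) : R :=
  fine (\int[P]_l (p a b l (inord x) (inord y))%:E)%E.

(* P_{X|A Lambda}(x|a,l) computed as the X-marginal of p at input b
   (independent of b by no-signalling). *)
Definition PXgivenAL {R : realType} {L : Type} (d : nat)
  (p : nat -> nat -> L -> 'I_d.+1 -> 'I_d.+1 -> R) (a b : nat) (l : L)
  (x : nat) : R :=
  \sum_(y < d.+1) p a b l (inord x) y.

Definition Ind {R : realType} {dL : measure_display} {L : measurableType dL}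
  (P : probability L R) (n d : nat)
  (p : nat -> nat -> L -> 'I_d.+1 -> 'I_d.+1 -> R) : R :=
  (2 * n)%:R
  - \sum_(x < d) PXY P p 0 (2 * n - 1) x ((x + 1) %% d)
  - \sum_(a < 2 * n | inA n a) \sum_(b < 2 * n | inB n b && ((a.+1 == b) || (b.+1 == a)))
       \sum_(x < d) PXY P p a b x x.

From HB Require Import structures.
From mathcomp Require Import all_boot all_order all_algebra.
From mathcomp Require Import all_classical all_reals all_analysis.
From mathcomp Require Import measurable_realfun.
From mathcomp Require Import ring lra zify.
Set Implicit Arguments.
Unset Strict Implicit.
Unset Printing Implicit Defensive.

Import Order.TTheory GRing.Theory Num.Theory.
Local Open Scope ring_scope.

(* Fix the hidden variable: the box q is then local, so each input has a
   well-defined output marginal (margA a, margB b).  For inputs a, b played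
   together, sum_x |margA a x - margB b x| is at most the two masses on
   {0, ..., d-1} minus twice the probability of equal outputs.  Chaining the
   adjacent pairs 0 - 1 - 2 - ... - (2n-1) and closing the cycle through the
   twisted pair (0, 2n-1) bounds the cyclic variation
   sum_x |margA 0 (x+1) - margA 0 x| by twice the local value of I minus the
   mass missing from {0, ..., d-1}.  A vector with small cyclic variation is
   close to its mean (within d/4 times the variation in l1), which gives the
   pointwise bound; since I is affine in the box, integrating over the hidden
   variable yields the claim. *)

Section RealSums.
Variable R : realFieldType.
Implicit Types (p f : nat -> R) (d : nat).

Lemma ler_sum_single (I : finType) (F : I -> R) i : (forall j, 0 <= F j) ->
  F i <= \sum_j F j.
Proof. by move=> F_ge0; rewrite (bigD1 i) //= lerDl sumr_ge0. Qed.

Lemma ler_sum_inord d (F : 'I_d.+1 -> R) : (forall j, 0 <= F j) ->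
  \sum_(x < d) F (inord x) <= \sum_j F j.
Proof.
move=> F_ge0; rewrite big_ord_recr /=.
have -> : \sum_(x < d) F (inord x) = \sum_(x < d) F (widen_ord (leqnSn d) x).
  by apply: eq_bigr => x _; congr F; apply: val_inj; rewrite /= inordK // ltnS ltnW.
by rewrite lerDl.
Qed.

Lemma sum_cst_ord d (c : R) : \sum_(x < d) c = d%:R * c.
Proof. by rewrite sumr_const card_ord mulr_natl. Qed.

Lemma sum_ord_modS f d : \sum_(x < d) f (x.+1 %% d)%N = \sum_(x < d) f x.
Proof. by rewrite [RHS](reindex_inj (@ordS_inj d)). Qed.

Lemma ler_dist_sum_nat f m n : (m <= n)%N ->
  `|f n - f m| <= \sum_(m <= k < n) `|f k.+1 - f k|.
Proof.
move=> /subnKC <-; elim: (n - m)%N => [|t IH]; first by rewrite addn0 big_geq // subrr normr0.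
rewrite addnS big_nat_recr ?leq_addr //=.
apply: le_trans (ler_distD (f (m + t)%N) _ _) _; by rewrite [leLHS]addrC lerD2r.
Qed.

Lemma big_nat_periodic f d j : (forall k, f (k + d)%N = f k) ->
  \sum_(j <= k < j + d) f k = \sum_(0 <= k < d) f k.
Proof.
move=> f_per; elim: j => [|j IH]; first by rewrite add0n.
rewrite -IH addSn; apply: (addrI (f j)).
by rewrite -big_ltn ?ltnS ?leq_addr // big_nat_recr ?leq_addr //= f_per addrC.
Qed.

Definition cyclic_variation p d := \sum_(k < d) `|p (k.+1 %% d)%N - p k|.

Lemma dist_le_cyclic_variation p d i j : (i < d)%N -> (j < d)%N ->
  2 * `|p i - p j| <= cyclic_variation p d.
Proof.
wlog ji : i j / (j <= i)%N.
  move=> wlog_ji id jd; have [ji|/ltnW ij] := leqP j i; first exact: wlog_ji.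
  by rewrite distrC; apply: wlog_ji.
move=> id jd; set g := fun k => p (k %% d)%N.
have -> : cyclic_variation p d = \sum_(j <= k < j + d) `|g k.+1 - g k|.
  rewrite big_nat_periodic; last by move=> k; rewrite /g -addSn !modnDr.
  by rewrite big_mkord; apply: eq_bigr => k _; rewrite /g (modn_small (ltn_ord k)).
have id' : (i <= j + d)%N by lia.
rewrite (@big_cat_nat _ _ _ i) //= mulr2n mulrDl mul1r.
apply: lerD; first by have := ler_dist_sum_nat g ji; rewrite /g !modn_small.
have := ler_dist_sum_nat g id'; rewrite /g modnDr !modn_small // distrC; exact.
Qed.

Lemma sum_dist_mean_le p d m M : (forall x, (x < d)%N -> m <= p x <= M) ->
  \sum_(x < d) `|p x - (\sum_(y < d) p y) / d%:R| <= d%:R * (M - m) / 2.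
Proof.
move=> pmM; have [->|d_gt0] := posnP d; first by rewrite big_ord0 mul0r mul0r.
set mu := _ / d%:R.
have dR : 0 < d%:R :> R by rewrite ltr0n.
have sum_p : \sum_(y < d) p y = d%:R * mu by rewrite mulrC divfK ?gt_eqF.
have [m_le_mu mu_le_M] : m <= mu /\ mu <= M.
  have : d%:R * m <= d%:R * mu <= d%:R * M.
    rewrite -sum_p -!sum_cst_ord; apply/andP; split; apply: ler_sum => x _;
      by case/andP: (pmM x (ltn_ord x)).
  by rewrite !ler_pM2l // => /andP.
(* On [m, M], t |-> |t - mu| lies below its chord. *)
have chord (x : 'I_d) : (M - m) * `|p x - mu| <= (p x - m) * (M - mu) + (mu - m) * (M - p x).
  have /andP[mx xM] := pmM x (ltn_ord x).
  have : 0 <= (mu - m) * (M - p x) by apply: mulr_ge0; lra.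
  have : 0 <= (p x - m) * (M - mu) by apply: mulr_ge0; lra.
  case: (lerP mu (p x)) => _; nra.
have sum_chord : \sum_(x < d) ((p x - m) * (M - mu) + (mu - m) * (M - p x))
    = 2 * d%:R * ((mu - m) * (M - mu)).
  rewrite (eq_bigr (fun x : 'I_d => p x * (M - 2 * mu + m) + (mu * M - 2 * m * M + m * mu)));
    last by move=> x _; ring.
  by rewrite big_split /= -mulr_suml sum_p sum_cst_ord; ring.
have [Mm|Mm] := eqVneq M m.
  rewrite Mm subrr mulr0 mul0r big1 // => x _; apply/normr0P; rewrite subr_eq0.
  by have /andP[] := pmM x (ltn_ord x); move=> *; apply/eqP; lra.
have mM : 0 < M - m by rewrite subr_gt0 lt_neqAle eq_sym Mm /=; lra.
rewrite -(ler_pM2l mM) mulr_sumr; apply: le_trans (ler_sum _ (fun x _ => chord x)) _.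
have : 0 <= d%:R * (M + m - 2 * mu) ^+ 2 by apply: mulr_ge0; [exact: ltW | exact: sqr_ge0].
rewrite sum_chord; nra.
Qed.

Lemma sum_dist_mean_le_cyclic_variation p d :
  \sum_(x < d) `|p x - (\sum_(y < d) p y) / d%:R| <= d%:R / 4 * cyclic_variation p d.
Proof.
case: d => [|d]; first by rewrite big_ord0 !mul0r.
have [i _ imax] := @arg_maxP _ _ _ ord0 predT (fun i : 'I_d.+1 => p i) isT.
have [j _ jmin] := @arg_minP _ _ _ ord0 predT (fun i : 'I_d.+1 => p i) isT.
apply: le_trans (sum_dist_mean_le (m := p j) (M := p i) _) _.
  by move=> x xd; apply/andP; split; [exact: (jmin (Ordinal xd)) | exact: (imax (Ordinal xd))].
have := dist_le_cyclic_variation p (ltn_ord i) (ltn_ord j).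
have := ler_norm (p i - p j); have : 0 <= d.+1%:R :> R by [].
nra.
Qed.

Lemma cyclic_variation1 p : cyclic_variation p 1 = 0.
Proof. by rewrite /cyclic_variation big_ord1 modnn subrr normr0. Qed.

Lemma sum_dist_uniform_le p d I : \sum_(x < d) p x <= 1 ->
  2 * (1 - \sum_(x < d) p x) <= I ->
  cyclic_variation p d <= 2 * (I - (1 - \sum_(x < d) p x)) ->
  \sum_(x < d) `|p x - d%:R^-1| <= d%:R / 2 * I.
Proof.
set m := \sum_(x < d) p x => m_le1 mI cvI.
have [->|d_gt0] := posnP d; first by rewrite big_ord0 !mul0r.
have dR : 0 < d%:R :> R by rewrite ltr0n.
have recenter : \sum_(x < d) `|p x - d%:R^-1| <= \sum_(x < d) `|p x - m / d%:R| + (1 - m).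
  apply: le_trans (ler_sum _ (fun x _ => ler_distD (m / d%:R) _ _)) _.
  have -> : m / d%:R - d%:R^-1 = - ((1 - m) / d%:R) by rewrite mulrBl mul1r opprB.
  rewrite big_split /= sum_cst_ord lerD2l normrN ger0_norm ?divr_ge0 ?subr_ge0 //.
  by rewrite mulrC divfK ?gt_eqF.
apply: le_trans recenter _; have := sum_dist_mean_le_cyclic_variation p d; rewrite -/m.
have [d1|d_ge2] := leqP d 1.
  have d1' : d = 1%N by apply/eqP; rewrite eqn_leq d1.
  by rewrite d1' cyclic_variation1 mulr0 mul1r; lra.
have : 2 <= d%:R :> R by rewrite (ler_nat R 2 d).
have : 0 <= cyclic_variation p d by apply: sumr_ge0.
nra.
Qed.
End RealSums.

(* The edge k joins the vertices k and k.+1 of the path 0 - 1 - ... - (2n-1);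
   its endpoints are an Alice input (even) and a Bob input (odd). *)
Definition even_end (k : nat) : nat := if odd k then k.+1 else k.
Definition odd_end (k : nat) : nat := if odd k then k else k.+1.

Section AdjacentPairs.
Variable R : realFieldType.

Lemma sum_ord_even (H : nat -> R) m :
  \sum_(a < 2 * m | ~~ odd a) H a = \sum_(0 <= i < m) H (2 * i)%N.
Proof.
rewrite -(big_mkord (fun a => ~~ odd a) H); elim: m => [|m IH]; first by rewrite !big_geq.
have -> : (2 * m.+1 = (2 * m).+2)%N by lia.
rewrite big_mkcond big_nat_recr // big_nat_recr //= -big_mkcond IH.
rewrite big_nat_recr //= mul2n odd_double /= addr0; congr (_ + _); by rewrite mul2n.
Qed.

Lemma sum_adjacent_inB (F : nat -> nat -> R) n (a : 'I_(2 * n)) : inA n a ->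
  \sum_(b < 2 * n | inB n b && ((a.+1 == b) || (b.+1 == a))) F a b
  = F a a.+1 + (if (0 < a)%N then F a a.-1 else 0).
Proof.
case/andP => ev alt.
rewrite (eq_bigl (fun b : 'I_(2 * n) =>
  (b == a.+1 :> nat) || ((0 < a)%N && (b == a.-1 :> nat)))); last first.
  move=> b; rewrite /inB (ltn_ord b) andbT; apply/idP/idP.
    case/andP => ob /orP[/eqP e|/eqP e]; first by rewrite -e eqxx.
    by apply/orP; right; rewrite -e /= eqxx.
  case/orP => [/eqP e|/andP[a0 /eqP e]].
    by rewrite e /= ev eqxx.
  have ab : (nat_of_ord a = b.+1)%N by lia.
  by move: ev; rewrite (congr1 odd ab) /= negbK => ->; apply/orP; right; apply/eqP; lia.
rewrite big_mkcond /=.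
rewrite (eq_bigr (fun b : 'I_(2 * n) => (if (b == a.+1 :> nat) then F a b else 0)
     + (if (0 < a)%N && (b == a.-1 :> nat) then F a b else 0))); last first.
  move=> b _; case: eqP => [e|_] /=; last by rewrite add0r.
  rewrite e; have -> : (a.+1 == a.-1) = false by lia.
  by rewrite andbF addr0.
rewrite big_split /= -!big_mkcond /= big_ord1_eq.
have -> : (a.+1 < 2 * n)%N.
  apply/negPn/negP => h; have e : (nat_of_ord a = 2 * n - 1)%N by lia.
  move: ev; rewrite e; have -> : (2 * n - 1 = (2 * n.-1).+1)%N by lia.
  by rewrite /= oddM.
congr (_ + _); case: (0 < a)%N => /=; last by rewrite big_pred0.
by rewrite big_ord1_eq (leq_ltn_trans (leq_pred a) alt).
Qed.

Lemma sum_even_end_odd_end (F : nat -> nat -> R) m :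
  \sum_(0 <= i < m.+1)
     (F (2 * i)%N (2 * i).+1 + (if (0 < 2 * i)%N then F (2 * i)%N (2 * i).-1 else 0))
  = \sum_(0 <= k < (2 * m).+1) F (even_end k) (odd_end k).
Proof.
elim: m => [|m IH]; first by rewrite !big_nat1 /even_end /odd_end /= addr0.
rewrite big_nat_recr // IH.
have e : ((2 * m.+1).+1 = ((2 * m).+1).+2)%N by lia.
rewrite e (big_nat_recr (2 * m).+2) // (big_nat_recr (2 * m).+1) //.
have o1 : odd (2 * m).+1 = true by rewrite /= mul2n odd_double.
have o2 : odd (2 * m).+2 = false by rewrite /= mul2n odd_double.
have e2 : (2 * m.+1 = (2 * m).+2)%N by lia.
have g1 : even_end (2 * m).+1 = (2 * m).+2 by rewrite /even_end o1.
have g2 : odd_end (2 * m).+1 = (2 * m).+1 by rewrite /odd_end o1.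
have g3 : even_end (2 * m).+2 = (2 * m).+2 by rewrite /even_end o2.
have g4 : odd_end (2 * m).+2 = (2 * m).+3 by rewrite /odd_end o2.
rewrite e2 g1 g2 g3 g4 /=; lra.
Qed.

Lemma sum_adjacent_pairs (F : nat -> nat -> R) n : (0 < n)%N ->
  \sum_(a < 2 * n | inA n a) \sum_(b < 2 * n | inB n b && ((a.+1 == b) || (b.+1 == a))) F a b
  = \sum_(0 <= k < 2 * n - 1) F (even_end k) (odd_end k).
Proof.
case: n => [//|m] _.
rewrite (eq_bigr (fun a : 'I_(2 * m.+1) => F a a.+1 + (if (0 < a)%N then F a a.-1 else 0)));
  last exact: sum_adjacent_inB.
rewrite (eq_bigl (fun a : 'I_(2 * m.+1) => ~~ odd a));
  last by move=> a; rewrite /inA (ltn_ord a) andbT.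
rewrite (sum_ord_even (fun a => F a a.+1 + (if (0 < a)%N then F a a.-1 else 0))).
have -> : (2 * m.+1 - 1 = (2 * m).+1)%N by lia.
exact: sum_even_end_odd_end.
Qed.

End AdjacentPairs.

Definition Ilocal (R : realFieldType) (n d : nat)
  (q : nat -> nat -> 'I_d.+1 -> 'I_d.+1 -> R) : R :=
  (2 * n)%:R
  - \sum_(x < d) q 0 (2 * n - 1)%N (inord x) (inord ((x + 1) %% d)%N)
  - \sum_(a < 2 * n | inA n a) \sum_(b < 2 * n | inB n b && ((a.+1 == b) || (b.+1 == a)))
       \sum_(x < d) q a b (inord x) (inord x).

Section LocalBox.
Variables (R : realFieldType) (n d : nat) (suppA suppB : pred nat).
Variable q : nat -> nat -> 'I_d.+1 -> 'I_d.+1 -> R.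
Hypothesis n_gt0 : (0 < n)%N.
Hypothesis inA_supp : forall a, inA n a -> suppA a.
Hypothesis inB_supp : forall b, inB n b -> suppB b.
Hypothesis q_ge0 : forall a b x y, suppA a -> suppB b -> 0 <= q a b x y.
Hypothesis q_sum1 : forall a b, suppA a -> suppB b ->
  \sum_(x < d.+1) \sum_(y < d.+1) q a b x y = 1.
Hypothesis q_nosigB : forall a b b' x, suppA a -> suppB b -> suppB b' ->
  \sum_(y < d.+1) q a b x y = \sum_(y < d.+1) q a b' x y.
Hypothesis q_nosigA : forall a a' b y, suppA a -> suppA a' -> suppB b ->
  \sum_(x < d.+1) q a b x y = \sum_(x < d.+1) q a' b x y.

Let suppA0 : suppA 0. Proof. by apply/inA_supp; rewrite /inA /=; lia. Qed.
Let suppB1 : suppB 1. Proof. by apply/inB_supp; rewrite /inB /=; lia. Qed.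

Lemma q_le1 a b x y : suppA a -> suppB b -> q a b x y <= 1.
Proof.
move=> Aa Bb; rewrite -(q_sum1 Aa Bb).
apply: le_trans (ler_sum_single (F := fun j => q a b x j) y _) _ => [j|].
  exact: q_ge0.
apply: (ler_sum_single (F := fun i => \sum_j q a b i j)) => i.
by apply: sumr_ge0 => j _; apply: q_ge0.
Qed.

(* By no-signalling the reference inputs 1 and 0 below could be any supported ones. *)
Definition margA a x := \sum_(y < d.+1) q a 1 (inord x) y.
Definition margB b y := \sum_(x < d.+1) q 0 b x (inord y).

Lemma q_le_margA a b x y : suppA a -> suppB b -> q a b (inord x) (inord y) <= margA a x.
Proof.
move=> Aa Bb; rewrite /margA -(q_nosigB _ Aa Bb suppB1).
by apply: ler_sum_single => j; apply: q_ge0.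
Qed.

Lemma q_le_margB a b x y : suppA a -> suppB b -> q a b (inord x) (inord y) <= margB b y.
Proof.
move=> Aa Bb; rewrite /margB -(q_nosigA _ Aa suppA0 Bb).
by apply: (ler_sum_single (F := fun j => q a b j (inord y))) => j; apply: q_ge0.
Qed.

Lemma sum_margA_le1 a : suppA a -> \sum_(x < d) margA a x <= 1.
Proof.
move=> Aa; rewrite -(q_sum1 Aa suppB1).
apply: (ler_sum_inord (F := fun x => \sum_y q a 1 x y)).
by move=> x; apply: sumr_ge0 => y _; apply: q_ge0.
Qed.

Lemma sum_margB_le1 b : suppB b -> \sum_(y < d) margB b y <= 1.
Proof.
move=> Bb; rewrite -(q_sum1 suppA0 Bb) /margB exchange_big; apply: ler_sum => x _.
by apply: (ler_sum_inord (F := q 0 b x)) => y; apply: q_ge0.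
Qed.

Lemma sum_dist_marg_le a b (s : nat -> nat) : suppA a -> suppB b ->
  \sum_(x < d) `|margA a x - margB b (s x)| <=
  \sum_(x < d) margA a x + \sum_(x < d) margB b (s x)
  - 2 * \sum_(x < d) q a b (inord x) (inord (s x)).
Proof.
move=> Aa Bb; rewrite mulr_sumr -big_split -sumrB /=; apply: ler_sum => x _.
have := q_le_margA x (s x) Aa Bb; have := q_le_margB x (s x) Aa Bb.
by rewrite ler_norml => *; apply/andP; split; lra.
Qed.

Definition node k y := if odd k then margB k y else margA k y.
Definition node_mass k := \sum_(y < d) node k y.
Definition edge_corr k := \sum_(y < d) q (even_end k) (odd_end k) (inord y) (inord y).

Lemma supp_edge k : (k.+1 < 2 * n)%N -> suppA (even_end k) /\ suppB (odd_end k).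
Proof.
move=> k_lt; rewrite /even_end /odd_end; case k_odd: (odd k); split.
- by apply: inA_supp; rewrite /inA /= k_odd.
- by apply: inB_supp; rewrite /inB k_odd; lia.
- by apply: inA_supp; rewrite /inA k_odd; lia.
- by apply: inB_supp; rewrite /inB /= k_odd.
Qed.

Lemma node_mass_le1 k : (k < 2 * n)%N -> node_mass k <= 1.
Proof.
move=> k_lt; rewrite /node_mass /node; case k_odd: (odd k).
  by apply: sum_margB_le1; apply: inB_supp; rewrite /inB k_odd.
by apply: sum_margA_le1; apply: inA_supp; rewrite /inA k_odd.
Qed.

Lemma edge_corr_le k : (k.+1 < 2 * n)%N ->
  edge_corr k <= \sum_(y < d) margA (even_end k) y.
Proof. by case/supp_edge => Aa Bb; apply: ler_sum => y _; apply: q_le_margA. Qed.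

Lemma dist_node_succ_le k : (k.+1 < 2 * n)%N ->
  \sum_(y < d) `|node k.+1 y - node k y| <= node_mass k + node_mass k.+1 - 2 * edge_corr k.
Proof.
case/supp_edge; rewrite /node_mass /node /edge_corr /even_end /odd_end /=.
case: (odd k) => /= Aa Bb.
  by have := sum_dist_marg_le (fun x => x) Aa Bb; lra.
under eq_bigr do rewrite distrC.
exact: (sum_dist_marg_le (fun x => x)).
Qed.

Local Notation N := (2 * n - 1)%N.

Let N_odd : odd N.
Proof. have -> : N = (2 * n.-1).+1 by lia. by rewrite /= mul2n odd_double. Qed.

Let suppBN : suppB N.
Proof. by apply: inB_supp; rewrite /inB N_odd; lia. Qed.

Lemma sum_dist_margA0_margB_le :
  \sum_(y < d) `|margA 0 y - margB N y| <=
  \sum_(0 <= k < N) (node_mass k + node_mass k.+1 - 2 * edge_corr k).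
Proof.
apply: le_trans (_ : _ <= \sum_(y < d) \sum_(0 <= k < N) `|node k.+1 y - node k y|) _.
  apply: ler_sum => y _; have := ler_dist_sum_nat (fun k => node k y) (leq0n N).
  by rewrite /node N_odd distrC.
rewrite exchange_big /=; apply: ler_sum_nat => k /andP[_ k_lt].
by apply: dist_node_succ_le; lia.
Qed.

Definition twist_corr := \sum_(x < d) q 0 N (inord x) (inord (x.+1 %% d)%N).
Definition Ichain := (2 * n)%:R - twist_corr - \sum_(0 <= k < N) edge_corr k.

Lemma Ilocal_chain : Ilocal n q = Ichain.
Proof.
rewrite /Ilocal /Ichain /twist_corr.
rewrite (sum_adjacent_pairs (fun a b => \sum_(x < d) q a b (inord x) (inord x)) n_gt0).
by under eq_bigr do rewrite addn1.
Qed.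

Lemma sum_node_mass_succ_le : \sum_(0 <= k < N) node_mass k.+1 <= N%:R.
Proof.
have <- : \sum_(0 <= k < N) (1 : R) = N%:R by rewrite sumr_const_nat subn0.
apply: ler_sum_nat => k /andP[_ k_lt].
by apply: node_mass_le1; lia.
Qed.

(* Going around the cycle 0 - 1 - ... - N and back to 0 through the twisted
   pair compares margA 0 with its own cyclic shift. *)
Lemma cyclic_variation_margA0_le :
  cyclic_variation (margA 0) d <= 2 * (Ichain - (1 - \sum_(x < d) margA 0 x)).
Proof.
set m := \sum_(x < d) margA 0 x.
have twist : \sum_(x < d) `|margA 0 x - margB N (x.+1 %% d)%N| <=
    m + node_mass N - 2 * twist_corr.
  have := sum_dist_marg_le (fun x => (x.+1 %% d)%N) suppA0 suppBN.
  by rewrite sum_ord_modS /node_mass /node N_odd.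
have split_cycle : cyclic_variation (margA 0) d <=
    \sum_(y < d) `|margA 0 y - margB N y| + \sum_(x < d) `|margA 0 x - margB N (x.+1 %% d)%N|.
  rewrite -(sum_ord_modS (fun y => `|margA 0 y - margB N y|)) -big_split /=.
  by apply: ler_sum => x _; rewrite (distrC (margA 0 x)) ler_distD.
have telescope : \sum_(0 <= k < N) node_mass k + node_mass N =
    m + \sum_(0 <= k < N) node_mass k.+1.
  by rewrite -big_nat_recr //= big_nat_recl.
have := sum_dist_margA0_margB_le; rewrite sumrB big_split /= -mulr_sumr.
have := sum_node_mass_succ_le.
have e2n : (2 * n)%:R = N%:R + 1 :> R by rewrite natr1; congr (_%:R); lia.
rewrite /Ichain e2n; lra.
Qed.

Lemma Ichain_ge : 2 * (1 - \sum_(x < d) margA 0 x) <= Ichain.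
Proof.
set m := \sum_(x < d) margA 0 x.
have twist_le : twist_corr <= m by apply: ler_sum => x _; apply: q_le_margA.
have edge_le : \sum_(0 <= k < N) edge_corr k <= m + (N.-1)%:R.
  have <- : \sum_(1 <= k < N) (1 : R) = (N.-1)%:R by rewrite sumr_const_nat subn1.
  have N_gt0 : (0 < N)%N by lia.
  rewrite big_ltn //; apply: lerD; first by apply: (edge_corr_le (k := 0)); lia.
  apply: ler_sum_nat => k /andP[_ k_lt]; have k_edge : (k.+1 < 2 * n)%N by lia.
  apply: le_trans (edge_corr_le k_edge) (sum_margA_le1 _).
  exact: (supp_edge k_edge).1.
have e2n : (2 * n)%:R = (N.-1)%:R + 2 :> R by rewrite -natrD; congr (_%:R); lia.
rewrite /Ichain e2n; lra.
Qed.

Lemma sum_dist_margA0_uniform_le :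
  \sum_(x < d) `|margA 0 x - d%:R^-1| <= d%:R / 2 * Ilocal n q.
Proof.
rewrite Ilocal_chain; apply: sum_dist_uniform_le.
- exact: sum_margA_le1.
- exact: Ichain_ge.
- exact: cyclic_variation_margA0_le.
Qed.

End LocalBox.

Section Integration.
Context (R : realType) (dL : measure_display) (L : measurableType dL).
Implicit Types (mu : {measure set L -> \bar R}) (D : set L).

Lemma integrable_sumr mu D (I : Type) (s : seq I) (Q : pred I) (h : I -> L -> R) :
  measurable D -> (forall i, Q i -> mu.-integrable D (EFin \o h i)) ->
  mu.-integrable D (EFin \o (fun x => \sum_(i <- s | Q i) h i x)).
Proof.
move=> mD h_int.
have := integrable_sum mD s (h := fun i => EFin \o h i) h_int.
by apply: eq_integrable => // x _ /=; rewrite sumEFin.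
Qed.

Lemma integrable_subr mu D (f g : L -> R) : measurable D ->
  mu.-integrable D (EFin \o f) -> mu.-integrable D (EFin \o g) ->
  mu.-integrable D (EFin \o (fun x => f x - g x)).
Proof.
move=> mD f_int g_int.
by apply: (eq_integrable mD _ _ _ (integrableB mD f_int g_int)) => x _ /=; rewrite EFinB.
Qed.

Lemma Rintegral_sum mu D (I : Type) (s : seq I) (Q : pred I) (h : I -> L -> R) :
  measurable D -> (forall i, Q i -> mu.-integrable D (EFin \o h i)) ->
  \int[mu]_(x in D) (\sum_(i <- s | Q i) h i x) = \sum_(i <- s | Q i) \int[mu]_(x in D) h i x.
Proof.
move=> mD h_int; elim: s => [|i s IH].
  rewrite big_nil (@eq_Rintegral _ _ _ mu D (fun _ => 0)) ?Rintegral_cst ?mul0r //.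
  by move=> x _; rewrite big_nil.
rewrite big_cons; case: ifP => Qi; last first.
  by rewrite -IH; apply: eq_Rintegral => x _; rewrite big_cons Qi.
rewrite -IH -RintegralD //; [|exact: h_int|exact: integrable_sumr].
by apply: eq_Rintegral => x _; rewrite big_cons Qi.
Qed.

Lemma integrable_unit_interval (mu : {finite_measure set L -> \bar R}) (f : L -> R) :
  measurable_fun setT f -> (forall x, 0 <= f x <= 1) -> mu.-integrable setT (EFin \o f).
Proof.
move=> mf f01; apply: (le_integrable _ _ _ (finite_measure_integrable_cst mu 1 measurableT)) => //.
  exact/measurable_EFinP.
move=> x _; have /andP[f0 f1] := f01 x.
by rewrite /= lee_fin normr1 ger0_norm.
Qed.

Lemma integral_le_Rintegral mu D (f g : L -> R) : measurable D ->
  (forall x, D x -> 0 <= f x) -> measurable_fun D f -> mu.-integrable D (EFin \o g) ->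
  (forall x, D x -> f x <= g x) ->
  (\int[mu]_(x in D) (f x)%:E <= (\int[mu]_(x in D) g x)%:E)%E.
Proof.
move=> mD f_ge0 mf g_int fg; rewrite fineK ?(integrable_fin_num mD g_int) //.
apply: ge0_le_integral => //; first exact/measurable_EFinP.
exact: measurable_int g_int.
Qed.

End Integration.

Section IlocalIntegral.
Context (R : realType) (dL : measure_display) (L : measurableType dL).
Variables (P : probability L R) (n d : nat) (suppA suppB : pred nat).
Variable p : nat -> nat -> L -> 'I_d.+1 -> 'I_d.+1 -> R.
Hypothesis n_gt0 : (0 < n)%N.
Hypothesis inA_supp : forall a, inA n a -> suppA a.
Hypothesis inB_supp : forall b, inB n b -> suppB b.
Hypothesis p_int : forall a b x y, suppA a -> suppB b ->
  P.-integrable setT (EFin \o (fun l => p a b l x y)).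

Local Notation diag a b l := (\sum_(x < d) p a b l (inord x) (inord x)).

Let suppA0 : suppA 0. Proof. by apply: inA_supp; rewrite /inA /=; lia. Qed.

Let suppBN : suppB (2 * n - 1)%N.
Proof.
apply: inB_supp; have -> : (2 * n - 1 = (2 * n.-1).+1)%N by lia.
by rewrite /inB /= mul2n odd_double /=; lia.
Qed.

Let twist_int : P.-integrable setT (EFin \o (fun l =>
  \sum_(x < d) p 0 (2 * n - 1)%N l (inord x) (inord ((x + 1) %% d)%N))).
Proof. by apply: integrable_sumr => // x _; apply: p_int. Qed.

Let diag_int a b : inA n a -> inB n b -> P.-integrable setT (EFin \o (fun l => diag a b l)).
Proof. by move=> Aa Bb; apply: integrable_sumr => // x _; apply: p_int; auto. Qed.

Let adjacent_int (a : 'I_(2 * n)) : inA n a ->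
  P.-integrable setT (EFin \o (fun l =>
    \sum_(b < 2 * n | inB n b && ((a.+1 == b) || (b.+1 == a))) diag a b l)).
Proof. by move=> Aa; apply: integrable_sumr => // b /andP[Bb _]; apply: diag_int. Qed.

Lemma integrable_Ilocal : P.-integrable setT (EFin \o (fun l => Ilocal n (fun a b => p a b l))).
Proof.
apply: integrable_subr => //; last first.
  by apply: integrable_sumr => // a Aa; apply: adjacent_int.
apply: integrable_subr => //; first exact: finite_measure_integrable_cst.
Qed.

Lemma Rintegral_Ilocal : \int[P]_l Ilocal n (fun a b => p a b l) = Ind P n p.
Proof.
have cst_int := finite_measure_integrable_cst P (2 * n)%:R measurableT.
rewrite /Ilocal /Ind RintegralB //; first last.
- by apply: integrable_sumr => // a; apply: adjacent_int.
- exact: integrable_subr.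
have P_setT : fine (P setT) = 1 :> R by rewrite probability_setT.
rewrite RintegralB // Rintegral_cst // P_setT mulr1.
rewrite Rintegral_sum //; last by move=> x _; apply: p_int.
rewrite Rintegral_sum //.
congr (_ - _ - _); apply: eq_bigr => a Aa.
rewrite Rintegral_sum //; last by move=> b /andP[Bb _]; apply: diag_int.
apply: eq_bigr => b /andP[Bb _].
by rewrite Rintegral_sum // => x _; apply: p_int; auto.
Qed.

End IlocalIntegral.

Theorem lemma2 (R : realType) (dL : measure_display) (L : measurableType dL)
  (P : probability L R) (n d : nat) (suppA suppB : pred nat)
  (p : nat -> nat -> L -> 'I_d.+1 -> 'I_d.+1 -> R) :
  (0 < n)%N ->
  (forall a, inA n a -> suppA a) ->
  (forall b, inB n b -> suppB b) ->
  (forall a b x y, suppA a -> suppB b ->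
     measurable_fun setT (fun l => p a b l x y)) ->
  (forall a b l x y, suppA a -> suppB b -> 0 <= p a b l x y) ->
  (forall a b l, suppA a -> suppB b ->
     \sum_(x < d.+1) \sum_(y < d.+1) p a b l x y = 1) ->
  (forall a b b' l x, suppA a -> suppB b -> suppB b' ->
     \sum_(y < d.+1) p a b l x y = \sum_(y < d.+1) p a b' l x y) ->
  (forall a a' b l y, suppA a -> suppA a' -> suppB b ->
     \sum_(x < d.+1) p a b l x y = \sum_(x < d.+1) p a' b l x y) ->
  (\int[P]_l (\sum_(x < d) `| PXgivenAL p 0 1 l x - d%:R^-1 |)%:E
     <= ((d%:R / 2) * Ind P n p)%:E)%E.
Proof.
move=> n_gt0 inA_supp inB_supp p_meas p_ge0 p_sum1 p_nosigB p_nosigA.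
have p_int a b x y : suppA a -> suppB b -> P.-integrable setT (EFin \o (fun l => p a b l x y)).
  move=> Aa Bb; apply: integrable_unit_interval => [|l]; first exact: p_meas.
  by rewrite p_ge0 //= (q_le1 (fun a b => p_ge0 a b l) (fun a b => p_sum1 a b l)).
have I_int := integrable_Ilocal n_gt0 inA_supp inB_supp p_int.
rewrite -(Rintegral_Ilocal n_gt0 inA_supp inB_supp p_int) -RintegralZl //.
apply: integral_le_Rintegral => // [l _|||l _].
- by apply: sumr_ge0 => x _.
- apply: measurable_sum => x; apply: measurableT_comp => //; apply: measurable_funB => //.
  rewrite /PXgivenAL; apply: measurable_sum => y.
  by apply: p_meas; [apply: inA_supp | apply: inB_supp]; rewrite /inA /inB /=; lia.
- apply: (eq_integrable measurableT _ _ _ (integrableZl measurableT (d%:R / 2) I_int)).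
  by move=> l _ /=; rewrite EFinM.
- exact: (sum_dist_margA0_uniform_le n_gt0 inA_supp inB_supp (fun a b => p_ge0 a b l)
    (fun a b => p_sum1 a b l) (fun a b b' => p_nosigB a b b' l) (fun a a' b => p_nosigA a a' b l)).
Qed.
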